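(* Let $G=(V,E)$ be a hypergraph and $\emptyset\neq R\subsetneq U\subsetneq V$. Let $S=\{u_1,\dots,u_p\}\subseteq U\setminus R$ with $p\ge 2$. For each $i\in[p]$ let $(\overline{A_i},A_i)$ be a minimum $((S\cup R)\setminus\{u_i\},\overline U)$-terminal cut, and suppose $u_i\in A_i\setminus\bigl(\bigcup_{j\in[p]\setminus\{i\}}A_j\bigr)$ for every $i\in[p]$. Let \[Z:=\bigcap_{i=1}^p\overline{A_i},\quad W:=\bigcup_{1\le i<j\le p}(A_i\cap A_j),\quad Y_i:=A_i\setminus W\ \ \forall i\in[p].\] Then $(Y_1,\dots,Y_p,W,Z)$ is a $(p+2)$-partition of $V$ with \[\sigma(Y_1,\dots,Y_p,W,Z)\le\min\{d(A_i)+d(A_j): i,j\in[p],\ i\ne j\}.\]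
   Context: A hypergraph $G=(V,E)$ has finite vertex set $V$ and finite multiset $E$ of hyperedges (subsets of $V$). For $X\subseteq V$, $\overline X=V\setminus X$ and $d(X)$ is the number of hyperedges meeting both $X$ and $\overline X$. For disjoint $S',T'\subseteq V$, a 2-partition $(X,\overline X)$ is an $(S',T')$-terminal cut if $S'\subseteq X\subseteq V\setminus T'$, and it is minimum if $d(X)$ is minimum among such cuts. For a partition $(Y_1,\dots,Y_p,W,Z)$ of $V$: $\mathrm{cost}(Y_1,\dots,Y_p,W,Z)$ is the number of hyperedges meeting at least two parts; $\mathrm{cost}(W,Z)$ is the number of hyperedges $e\subseteq W\cup Z$ meeting both $W$ and $Z$; $\alpha(Y_1,\dots,Y_p,W,Z)$ is the number of hyperedges meeting $Z$ and at least two of $Y_1,\dots,Y_p,W$; $\beta(Y_1,\dots,Y_p,Z)$ is the number of hyperedges disjoint from $Z$ meeting at least two of $Y_1,\dots,Y_p$; $\sigma:=\mathrm{cost}(Y_1,\dots,Y_p,W,Z)+\mathrm{cost}(W,Z)+\alpha+\beta$. *)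

(* hypergraphs on a finite vertex type V,
   hyperedges given as a multiset (seq) of vertex sets. *)
From mathcomp Require Import all_boot.
Set Implicit Arguments. Unset Strict Implicit. Unset Printing Implicit Defensive.

Section Hyper.
Variable V : finType.

Definition meets (e X : {set V}) : bool := e :&: X != set0.

Definition dcut (E : seq {set V}) (X : {set V}) : nat :=
  count (fun e => meets e X && meets e (~: X)) E.

Definition terminal_cut (S' T' X : {set V}) : bool :=
  (S' \subset X) && (X \subset ~: T').

Definition min_terminal_cut (E : seq {set V}) (S' T' X : {set V}) : Prop :=
  terminal_cut S' T' X /\
  forall Y : {set V}, terminal_cut S' T' Y -> dcut E X <= dcut E Y.

Definition meets_two (parts : seq {set V}) (e : {set V}) : bool :=
  1 < count (meets e) parts.

Definition cost_parts (E : seq {set V}) (parts : seq {set V}) : nat :=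
  count (meets_two parts) E.

Definition cost2 (E : seq {set V}) (W Z : {set V}) : nat :=
  count (fun e : {set V} => (e \subset W :|: Z) && meets e W && meets e Z) E.

Definition alpha (E : seq {set V}) (Ys : seq {set V}) (W Z : {set V}) : nat :=
  count (fun e => meets e Z && meets_two (rcons Ys W) e) E.

Definition beta (E : seq {set V}) (Ys : seq {set V}) (Z : {set V}) : nat :=
  count (fun e => ~~ meets e Z && meets_two Ys e) E.

Definition sigma (E : seq {set V}) (Ys : seq {set V}) (W Z : {set V}) : nat :=
  cost_parts E (Ys ++ [:: W; Z]) + cost2 E W Z + alpha E Ys W Z + beta E Ys Z.

Definition is_partition_of_V (parts : seq {set V}) : Prop :=
  (forall i j, i < size parts -> j < size parts -> i != j ->
     [disjoint nth set0 parts i & nth set0 parts j]) /\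
  (forall v : V, exists2 X, X \in parts & v \in X).

End Hyper.

From mathcomp Require Import all_boot zify.
Set Implicit Arguments. Unset Strict Implicit. Unset Printing Implicit Defensive.

(* Sort the vertices by how many of the A_i contain them: Z, the Y_i and W are
   the vertices covered 0 times, exactly once (by A_i), and at least twice.
   Building the family one set A_k at a time, every hyperedge e obeys an
   uncrossing inequality: its contribution to sigma grows by at most
   [e crosses A_k] - [e crosses A_k :&: W'], with W' the overlap of the sets
   added before. Summed over all hyperedges, along an order that adds A_j and
   A_i first, this gives
     sigma + sum_(k != i, j) d(A_k :&: W'_k) <= sum_k d(A_k).
   For each such k, W'_k contains A_i :&: A_j, hence ~: U, so the complement
   of A_k :&: W'_k is another terminal cut for the terminals of A_k, and
   minimality gives d(A_k) <= d(A_k :&: W'_k). *)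

Section Hypergraph.
Variable V : finType.
Implicit Types (e X Y : {set V}) (E : seq {set V}).

Lemma meetsP e X : reflect (exists2 v, v \in e & v \in X) (meets e X).
Proof.
rewrite /meets; apply: (iffP (set0Pn _)) => [[v]|[v ve vX]].
  by rewrite inE => /andP[]; exists v.
by exists v; rewrite inE ve.
Qed.

Lemma meetsU e X Y : meets e (X :|: Y) = meets e X || meets e Y.
Proof. by rewrite /meets setIUr setU_eq0 negb_and. Qed.

Lemma meetsS e X Y : X \subset Y -> meets e X -> meets e Y.
Proof. by move=> /subsetP sXY /meetsP[v ve /sXY vY]; apply/meetsP; exists v. Qed.

Lemma meetsID e X Y : meets e X = meets e (X :\: Y) || meets e (X :&: Y).
Proof. by rewrite orbC -meetsU setID. Qed.

Lemma subset_meetsC e X : (e \subset X) = ~~ meets e (~: X).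
Proof. by rewrite /meets negbK setI_eq0 -subsets_disjoint. Qed.

Definition crosses e X := meets e X && meets e (~: X).

Lemma count_sum (T : Type) (a : pred T) (r : seq T) : count a r = \sum_(x <- r) a x.
Proof. by elim: r => [|x r IHr]; rewrite ?big_nil ?big_cons //= IHr. Qed.

Lemma dcutE E X : dcut E X = \sum_(e <- E) crosses e X.
Proof. exact: count_sum. Qed.

Lemma dcutC E X : dcut E (~: X) = dcut E X.
Proof. by rewrite /dcut setCK; apply: eq_count => e; rewrite andbC. Qed.

Lemma min_terminal_cut_le E S T X Y :
  min_terminal_cut E S T (~: X) -> T \subset Y -> Y \subset X -> dcut E X <= dcut E Y.
Proof.
case=> /andP[sSX _] minX sTY sYX; rewrite -dcutC -(dcutC E Y).
by apply: minX; rewrite /terminal_cut setCS sTY (subset_trans sSX) ?setCS.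
Qed.

Lemma partition_of_count1 (parts : seq {set V}) :
  (forall v, count (fun X => v \in X) parts = 1) -> is_partition_of_V parts.
Proof.
move=> count1; split=> [i j lt_i lt_j neq_ij | v].
  rewrite -setI_eq0; apply/eqP/setP => v; rewrite !inE; apply/negP => /andP[vi vj].
  have := count1 v; rewrite count_sum (big_nth set0) big_mkord.
  rewrite (bigD1 (Ordinal lt_i)) // (bigD1 (Ordinal lt_j)) //= ?vi ?vj //.
  by rewrite -val_eqE /= eq_sym.
have /hasP[X ? ?] : has (fun X => v \in X) parts by rewrite has_count count1.
by exists X.
Qed.

Section Family.
Variables (I : eqType) (A : I -> {set V}).
Implicit Types (s : seq I) (k l : I).

Definition mult s v := count (fun k => v \in A k) s.
Definition uncovered s := [set v | mult s v == 0].
Definition covered_once s := [set v | mult s v == 1].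
Definition overlap s := [set v | 1 < mult s v].
Definition private_part s l := A l :&: covered_once s.

Lemma mult_gt0P s v : reflect (exists2 l, l \in s & v \in A l) (0 < mult s v).
Proof. by rewrite /mult -has_count; apply: hasP. Qed.

Lemma mult_gt0 s l v : l \in s -> v \in A l -> 0 < mult s v.
Proof. by move=> ls vl; apply/mult_gt0P; exists l. Qed.

Lemma uncovered_cons k s : uncovered (k :: s) = uncovered s :\: A k.
Proof.
by apply/setP => v; rewrite !inE /mult /=; case: (v \in A k); case: count.
Qed.

Lemma overlap_cons k s : overlap (k :: s) = overlap s :|: (covered_once s :&: A k).
Proof.
apply/setP => v; rewrite !inE /mult /=.
by case: (v \in A k); case: count => [|[|n]].
Qed.

Lemma setC_overlap s : ~: overlap s = uncovered s :|: covered_once s.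
Proof. by apply/setP => v; rewrite !inE; case: mult => [|[|n]]. Qed.

Lemma private_part_head k s : private_part (k :: s) k = uncovered s :&: A k.
Proof.
apply/setP => v; rewrite !inE /mult /=.
by case: (v \in A k); case: count => [|[|n]].
Qed.

Lemma private_part_cons k s l :
  l \in s -> private_part (k :: s) l = private_part s l :\: A k.
Proof.
move=> ls; apply/setP => v; rewrite !inE andbC.
case vl: (v \in A l); rewrite ?andbF //=.
move: (mult_gt0 ls vl); rewrite /mult /=.
by case: (v \in A k); case: count => [|[|n]].
Qed.

Lemma setD_overlap s l : l \in s -> A l :\: overlap s = private_part s l.
Proof.
move=> ls; apply/setP => v; rewrite !inE.
case vl: (v \in A l); rewrite ?andbF //=.
move: (mult_gt0 ls vl).
by case: mult => [|[|n]].
Qed.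

Lemma meets_levels e s X :
  meets e X = [|| meets e (uncovered s :&: X), meets e (covered_once s :&: X)
               | meets e (overlap s :&: X)].
Proof.
rewrite -!meetsU -!setIUl; congr meets; apply/setP => v.
by rewrite !inE; case: mult => [|[|n]].
Qed.

Lemma count_meets_gt0 e s X : X \subset ~: uncovered s ->
  (0 < count (fun l => meets e (A l :&: X)) s) = meets e X.
Proof.
move=> /subsetP sXc; rewrite -has_count; apply/hasP/meetsP.
  by case=> l _ /meetsP[v ve]; rewrite inE => /andP[_ vX]; exists v.
case=> v ve /[dup] vX /sXc; rewrite !inE -lt0n => /mult_gt0P[l ls vl].
by exists l => //; apply/meetsP; exists v; rewrite // inE vl.
Qed.

Lemma covered_once_subC s : covered_once s \subset ~: uncovered s.
Proof. by apply/subsetP => v; rewrite !inE => /eqP->. Qed.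

(* The contribution of a hyperedge to sigma when it meets Z iff [z], W iff [w],
   and exactly [y] of the Y_i: the four summands are those of cost(Y,W,Z),
   cost(W,Z), alpha and beta. *)
Definition sigma_term (z w : bool) (y : nat) : nat :=
  (1 < y + (w + z)) + [&& y == 0, w & z] + (z && (1 < y + w)) + (~~ z && (1 < y)).

(* Read [a_t] (resp. [b_t]) as "e meets a vertex outside (resp. inside) A k
   that is covered 0, 1 or at least 2 times by the family", and [y] (resp.
   [ys]) as the number of private parts that e meets (resp. outside A k). *)
Lemma sigma_term_cons (a0 a1 a2 b0 b1 b2 : bool) (y ys : nat) :
  ys <= y -> (ys < y -> b1) -> (b1 -> 0 < y) -> a1 = (0 < ys) ->
  sigma_term a0 [|| a2, b2 | b1] (ys + b0) + (b2 && [|| a0, a1, a2, b0 | b1])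
  <= sigma_term (a0 || b0) (a2 || b2) y + ([|| b0, b1 | b2] && [|| a0, a1 | a2]).
Proof.
move=> le_ys_y lt_b1 b1_gt0 ->.
case: y le_ys_y lt_b1 b1_gt0 => [|[|y]]; case: ys => [|[|ys]] //=;
case: a0; case: a2; case: b0; case: b1; case: b2 => //= *; lia.
Qed.

Definition private_met s e := count (fun l => meets e (private_part s l)) s.

Definition sigma_edge s e :=
  sigma_term (meets e (uncovered s)) (meets e (overlap s)) (private_met s e).

Lemma sigma_edge_cons e k s :
  sigma_edge (k :: s) e + crosses e (A k :&: overlap s)
  <= sigma_edge s e + crosses e (A k).
Proof.
set a0 := meets e (uncovered s :\: A k); set b0 := meets e (uncovered s :&: A k).
set a1 := meets e (covered_once s :\: A k); set b1 := meets e (covered_once s :&: A k).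
set a2 := meets e (overlap s :\: A k); set b2 := meets e (overlap s :&: A k).
set ys := count (fun l => meets e (private_part s l :\: A k)) s.
set y := private_met s e.
have met_cons : private_met (k :: s) e = ys + b0.
  rewrite /private_met /= private_part_head addnC; congr (_ + _).
  by apply: eq_in_count => l ls; rewrite /= private_part_cons.
have crosses_overlap : crosses e (A k :&: overlap s) = b2 && [|| a0, a1, a2, b0 | b1].
  rewrite /crosses setIC setCI meetsU setC_overlap meetsU (meets_levels _ s (~: A k)).
  rewrite -!setDE (meetsID _ (uncovered s) (A k)) (meetsID _ (covered_once s) (A k)).
  rewrite -/a0 -/b0 -/a1 -/b1 -/a2; congr (_ && _).
  by case: (a0); case: (a1); case: (a2); case: (b0); case: (b1).
have crosses_Ak : crosses e (A k) = [|| b0, b1 | b2] && [|| a0, a1 | a2].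
  by rewrite /crosses (meets_levels _ s) (meets_levels _ s (~: A k)) -!setDE.
have a1E : a1 = (0 < ys).
  rewrite /ys /private_part; under eq_count => l do rewrite -setIDA.
  by rewrite count_meets_gt0 // (subset_trans _ (covered_once_subC s)) ?subsetDl.
have ys_le : ys <= y by apply: sub_count => l; apply: meetsS; apply: subsetDl.
have ys_lt : ys < y -> b1.
  apply: contraLR => nb1; rewrite -leqNgt; apply: sub_count => l /=.
  rewrite (meetsID _ _ (A k)) => /orP[//|met]; case/negP: nb1.
  by apply: meetsS met; apply: setSI; apply: subsetIr.
have y_gt0 : b1 -> 0 < y.
  rewrite /y /private_met /private_part count_meets_gt0 ?covered_once_subC //.
  by apply: meetsS; apply: subsetIl.
rewrite crosses_overlap crosses_Ak /sigma_edge met_cons uncovered_cons overlap_cons.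
rewrite meetsU (meetsID _ (overlap s) (A k)) (meetsID _ (uncovered s) (A k)) -orbA.
exact: sigma_term_cons.
Qed.

Definition sigma_sum E s := \sum_(e <- E) sigma_edge s e.

Fixpoint overlap_cuts E s :=
  if s is k :: s' then dcut E (A k :&: overlap s') + overlap_cuts E s' else 0.

Lemma sigma_sum_nil E : sigma_sum E [::] = 0.
Proof.
apply: big1_seq => e _; rewrite /sigma_edge.
have -> : overlap [::] = set0 by apply/setP => v; rewrite !inE.
by rewrite /meets setI0 eqxx /sigma_term; case: (_ != set0).
Qed.

Lemma sigma_sum_uncross E s :
  sigma_sum E s + overlap_cuts E s <= \sum_(k <- s) dcut E (A k).
Proof.
elim: s => [|k s IHs]; first by rewrite sigma_sum_nil.
have step : sigma_sum E (k :: s) + dcut E (A k :&: overlap s)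
            <= sigma_sum E s + dcut E (A k).
  by rewrite !dcutE /sigma_sum -!big_split leq_sum // => e _; apply: sigma_edge_cons.
by rewrite big_cons /=; lia.
Qed.

Lemma overlap_cuts_ge E r t :
  (forall k r', dcut E (A k) <= dcut E (A k :&: overlap (r' ++ t))) ->
  \sum_(k <- r) dcut E (A k) <= overlap_cuts E (r ++ t).
Proof.
move=> le_overlap; elim: r => [|k r IHr]; first by rewrite big_nil.
by rewrite big_cons /= leq_add.
Qed.

Lemma perm_sigma_sum E s t : perm_eq s t -> sigma_sum E s = sigma_sum E t.
Proof.
move=> pst; have eq_mult v : mult s v = mult t v by apply: permP.
have [eq_u eq_c eq_o] : [/\ uncovered s = uncovered t, covered_once s = covered_once t
                    & overlap s = overlap t].
  by split; apply/setP => v; rewrite !inE eq_mult.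
apply: eq_bigr => e _.
by rewrite /sigma_edge /private_met /private_part eq_u eq_c eq_o (permP pst).
Qed.

Lemma sigmaE E s :
  sigma E [seq A l :\: overlap s | l <- s] (overlap s) (uncovered s) = sigma_sum E s.
Proof.
have count_parts e : count (meets e) [seq A l :\: overlap s | l <- s] = private_met s e.
  by rewrite count_map; apply: eq_in_count => l ls; rewrite /= setD_overlap.
have sub_rest e : (e \subset overlap s :|: uncovered s) = (private_met s e == 0).
  rewrite subset_meetsC; have -> : ~: (overlap s :|: uncovered s) = covered_once s.
    by apply/setP => v; rewrite !inE; case: mult => [|[|n]].
  rewrite eqn0Ngt /private_met /private_part.
  by rewrite count_meets_gt0 ?covered_once_subC.
rewrite /sigma /cost_parts /cost2 /alpha /beta /sigma_sum !count_sum -!big_split.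
apply: eq_bigr => e _; rewrite /meets_two /sigma_edge /sigma_term -cats1 !count_cat.
by rewrite count_parts sub_rest /= !addn0 andbA.
Qed.

Lemma count_mem_levels s v :
  count (fun X => v \in X)
    ([seq A l :\: overlap s | l <- s] ++ [:: overlap s; uncovered s]) = 1.
Proof.
rewrite count_cat count_map /= !inE addn0; under eq_count => l do rewrite !inE.
case: (leqP (mult s v) 1) => [le1 | gt1] /=.
  by move: le1; rewrite /mult; case: count => [|[|n]].
by rewrite (eq_count (a2 := pred0)) // count_pred0 gtn_eqF // ltnW.
Qed.

Section MinimumCuts.
Variables (E : seq {set V}) (S : I -> {set V}) (T : {set V}).
Hypothesis minA : forall k, min_terminal_cut E (S k) T (~: A k).

Lemma sigma_sum_le_pair r i j :
  sigma_sum E (r ++ [:: i; j]) <= dcut E (A i) + dcut E (A j).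
Proof.
have sub_A k : T \subset A k by have [/andP[_]] := minA k; rewrite setCS.
have le_overlap k r' : dcut E (A k) <= dcut E (A k :&: overlap (r' ++ [:: i; j])).
  apply: min_terminal_cut_le (minA k) _ (subsetIl _ _).
  rewrite subsetI sub_A; apply/subsetP => v vT; rewrite inE /mult count_cat /=.
  by rewrite (subsetP (sub_A i)) ?(subsetP (sub_A j)) //; lia.
have := sigma_sum_uncross E (r ++ [:: i; j]); have := overlap_cuts_ge r le_overlap.
by rewrite big_cat !big_cons big_nil /=; lia.
Qed.

End MinimumCuts.

End Family.
End Hypergraph.

Lemma bigcap_setC_uncovered (V : finType) (T : finType) (A : T -> {set V}) :
  \bigcap_k ~: A k = uncovered A (enum T).
Proof.
apply/setP => v; rewrite !inE eqn0Ngt; apply/bigcapP/idP => [notA | nA k _].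
  by apply/mult_gt0P => -[k _ vk]; move: (notA k isT); rewrite inE vk.
by rewrite inE; apply: contra nA => vk; apply: mult_gt0 (mem_enum _ k) vk.
Qed.

Lemma mult_enum (V : finType) (T : finType) (A : T -> {set V}) v :
  mult A (enum T) v = #|[pred k | v \in A k]|.
Proof. by rewrite /mult cardE -size_filter /enum_mem filter_predT. Qed.

Lemma bigcup_ltn_overlap (V : finType) n (A : 'I_n -> {set V}) :
  \bigcup_(i : 'I_n) \bigcup_(j : 'I_n | i < j) (A i :&: A j) = overlap A (enum 'I_n).
Proof.
apply/setP => v; rewrite inE mult_enum; apply/bigcupP/card_gt1P.
  case=> i _ /bigcupP[j lt_ij]; rewrite inE => /andP[vi vj].
  by exists i, j; split; rewrite ?inE // neq_ltn lt_ij.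
case=> i [j []]; rewrite !inE.
case: (ltngtP i j) => [lt_ij | lt_ji | /val_inj ->] vi vj; rewrite ?eqxx // => _.
  by exists i => //; apply/bigcupP; exists j; rewrite ?inE ?vi ?vj.
by exists j => //; apply/bigcupP; exists i; rewrite ?inE ?vi ?vj.
Qed.

Lemma perm_rem_pair (T : eqType) (s : seq T) i j :
  uniq s -> i \in s -> j \in s -> i != j -> perm_eq s (rem j (rem i s) ++ [:: i; j]).
Proof.
move=> uniq_s si sj neq_ij.
have sij : j \in rem i s by rewrite (mem_rem_uniq _ uniq_s) inE eq_sym neq_ij sj.
apply: perm_trans (perm_to_rem si) _.
by rewrite perm_sym perm_catC /= perm_cons perm_sym perm_to_rem.
Qed.

Unset Implicit Arguments.
Set Strict Implicit.

Theorem lemma3p4 (V : finType) (E : seq {set V}) (R U : {set V})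
  (p : nat) (u : 'I_p -> V) (A : 'I_p -> {set V}) :
  R != set0 -> R \proper U -> U \proper [set: V] ->
  2 <= p -> injective u ->
  (forall i, u i \in U :\: R) ->
  (forall i, min_terminal_cut E
       (([set u j | j : 'I_p] :|: R) :\ u i) (~: U) (~: A i)) ->
  (forall i, (u i \in A i) &&
       (u i \notin \bigcup_(j : 'I_p | j != i) A j)) ->
  let Z := \bigcap_(i : 'I_p) ~: A i in
  let W := \bigcup_(i : 'I_p) \bigcup_(j : 'I_p | i < j) (A i :&: A j) in
  let Ys := [seq A i :\: W | i <- enum 'I_p] in
  is_partition_of_V (Ys ++ [:: W; Z]) /\
  (forall i j : 'I_p, i != j ->
     sigma E Ys W Z <= dcut E (A i) + dcut E (A j)).
Proof.
(* Only the minimality of the cuts matters: it is used through ~: U being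
   contained in every A i. *)
move=> _ _ _ _ _ _ minA _ Z W Ys.
rewrite /Ys /W /Z bigcup_ltn_overlap bigcap_setC_uncovered.
split=> [|i j neq_ij].
  by apply: partition_of_count1 => v; apply: count_mem_levels.
have perm_ij := perm_rem_pair (enum_uniq _) (mem_enum _ i) (mem_enum _ j) neq_ij.
rewrite sigmaE (perm_sigma_sum A E perm_ij).
exact: sigma_sum_le_pair minA _ _ _.
Qed.
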